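(* Let $r$ be an integer. For every choice of $\gamma_{2i}\in\mathbb{K}$, $i=0,1,2,\dots$, there is a unique choice of $\gamma_{2i+1}\in\mathbb{K}$, $i=0,1,2,\dots$, such that $\varphi(x)=\sum_{i\ge0}\gamma_ix^i\in\mathcal{F}_r$.
   Context: $\mathbb{K}\in\{\mathbb{Q},\mathbb{R},\mathbb{C}\}$. For $r\in\mathbb{Z}$, $\mathcal{F}_r$ denotes the space of $\varphi\in\mathbb{K}[[x]]$ with $\varphi(x/(x-1))=(1-x)^r\varphi(x)$. *)

(* Formal power series over K are represented by their
   coefficient sequences  nat -> K. *)
From HB Require Import structures.
From mathcomp Require Import all_boot all_order all_algebra.
Set Implicit Arguments. Unset Strict Implicit. Unset Printing Implicit Defensive.
Import Order.TTheory GRing.Theory Num.Theory.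
Local Open Scope ring_scope.

Section FPS.
Variable K : numFieldType.

Definition fps_mul (a b : nat -> K) : nat -> K :=
  fun n => \sum_(i < n.+1) a i * b (n - i)%N.

Definition fps_one : nat -> K := fun n => if n == 0%N then 1 else 0.

Definition fps_X : nat -> K := fun n => if n == 1%N then 1 else 0.

Definition fps_exp (a : nat -> K) (j : nat) : nat -> K :=
  iter j (fps_mul a) fps_one.

Definition fps_1mX : nat -> K :=
  fun n => if n == 0%N then 1 else if n == 1%N then -1 else 0.

(* the series 1/(1-x) = sum_n x^n, the multiplicative inverse of 1 - x *)
Definition fps_geom : nat -> K := fun _ => 1.

(* (1-x)^r for r an integer: (1-x)^k for r = k >= 0,
   (1/(1-x))^(k+1) for r = Negz k = -(k+1) *)
Definition fps_powz (r : int) : nat -> K :=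
  match r with
  | Posz k => fps_exp fps_1mX k
  | Negz k => fps_exp fps_geom k.+1
  end.

(* the series x/(x-1) = x * (-(1/(1-x))) *)
Definition fps_x_over_xm1 : nat -> K :=
  fps_mul fps_X (fun n => - fps_geom n).

(* composition a(g(x)) for a series g with zero constant term;
   since g^j has order >= j, only j <= n contributes to the n-th coefficient *)
Definition fps_comp (a g : nat -> K) : nat -> K :=
  fun n => \sum_(j < n.+1) a j * fps_exp g j n.

(* the space F_r : phi(x/(x-1)) = (1-x)^r phi(x) *)
Definition inF (r : int) (phi : nat -> K) : Prop :=
  forall n, fps_comp phi fps_x_over_xm1 n = fps_mul (fps_powz r) phi n.

(* the series with even coefficients gamma_{2i} = ev i and
   odd coefficients gamma_{2i+1} = od i *)
Definition interleave (ev od : nat -> K) : nat -> K :=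
  fun n => if odd n then od n./2 else ev n./2.

End FPS.

From mathcomp Require Import all_boot all_order all_algebra.
From mathcomp Require Import ring zify.
From Stdlib Require Import FunctionalExtensionality.
Set Implicit Arguments. Unset Strict Implicit. Unset Printing Implicit Defensive.
Import Order.TTheory GRing.Theory Num.Theory.
Local Open Scope ring_scope.

(* Let [D phi = phi(x/(x-1)) - (1-x)^r phi].  As x/(x-1) = -x + O(x^2), the
   n-th coefficient of [D phi] is [((-1)^n - 1) phi_n] plus terms depending
   only on lower coefficients of [phi]: at odd [n] the equation [(D phi)_n = 0]
   has exactly one solution [phi_n].  At even [n] the equation holds as soon as
   it holds below [n]: x/(x-1) is an involution, whence
   [(D phi)(x/(x-1)) = -(1-x)^(-r) D phi]; if [D phi = O(x^n)], comparing n-th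
   coefficients gives [d = -d] for [d = (D phi)_n].  All series computations
   are carried out on polynomials modulo x^N. *)

Section PolyModXn.
Variable R : comNzRingType.
Implicit Types (a b c d p q s t : {poly R}).

Definition eqmodX N a b := exists s, a = b + s * 'X^N.

Lemma eqmodX_refl N a : eqmodX N a a.
Proof. by exists 0; rewrite mul0r addr0. Qed.

Lemma eqmodX_sym N a b : eqmodX N a b -> eqmodX N b a.
Proof. by move=> [s ->]; exists (- s); ring. Qed.

Lemma eqmodX_trans N a b c : eqmodX N a b -> eqmodX N b c -> eqmodX N a c.
Proof. by move=> [s ->] [s' ->]; exists (s + s'); ring. Qed.

Lemma eqmodXD N a b c d : eqmodX N a b -> eqmodX N c d -> eqmodX N (a + c) (b + d).
Proof. by move=> [s ->] [s' ->]; exists (s + s'); ring. Qed.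

Lemma eqmodXN N a b : eqmodX N a b -> eqmodX N (- a) (- b).
Proof. by move=> [s ->]; exists (- s); ring. Qed.

Lemma eqmodXB N a b c d : eqmodX N a b -> eqmodX N c d -> eqmodX N (a - c) (b - d).
Proof. by move=> ab cd; apply: eqmodXD (eqmodXN cd). Qed.

Lemma eqmodXM N a b c d : eqmodX N a b -> eqmodX N c d -> eqmodX N (a * c) (b * d).
Proof. by move=> [s ->] [s' ->]; exists (s * d + b * s' + s * s' * 'X^N); ring. Qed.

Lemma eqmodXMl N a c d : eqmodX N c d -> eqmodX N (a * c) (a * d).
Proof. exact/eqmodXM/eqmodX_refl. Qed.

Lemma eqmodXMr N a b c : eqmodX N a b -> eqmodX N (a * c) (b * c).
Proof. by move=> ab; apply: eqmodXM ab (eqmodX_refl _ _). Qed.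

Lemma eqmodXX N a b k : eqmodX N a b -> eqmodX N (a ^+ k) (b ^+ k).
Proof.
move=> ab; elim: k => [|k IH]; first by rewrite !expr0; apply: eqmodX_refl.
by rewrite !exprS; apply: eqmodXM.
Qed.

Lemma eqmodX_mul1 N a b : eqmodX N b 1 -> eqmodX N (a * b) a.
Proof. by move=> [s ->]; exists (a * s); ring. Qed.

Lemma eqmodX_compr N p q q' : eqmodX N q q' -> eqmodX N (p \Po q) (p \Po q').
Proof.
move=> qq'; rewrite !comp_polyE; apply: (big_ind2 (eqmodX N)).
- exact: eqmodX_refl.
- by move=> *; apply: eqmodXD.
- move=> i _; case: (eqmodXX i qq') => s ->.
  by exists (p`_i *: s); rewrite scalerDr scalerAl.
Qed.

Lemma eqmodX_coef N a b n : eqmodX N a b -> (n < N)%N -> a`_n = b`_n.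
Proof. by move=> [s ->] ltnN; rewrite coefD coefMXn ltnN addr0. Qed.

Lemma coef_comp_poly_Xmul p t n :
  (p \Po ('X * t))`_n = \sum_(i < n.+1) p`_i * (('X * t) ^+ i)`_n.
Proof.
set F := fun i => p`_i * (('X * t) ^+ i)`_n.
have vanish i : (size p <= i)%N || (n < i)%N -> F i = 0.
  case/orP=> hi; first by rewrite /F nth_default ?mul0r.
  by rewrite /F exprMn coefXnM hi mulr0.
set M := maxn (size p) n.+1.
rewrite coef_comp_poly (big_ord_widen M F (leq_maxl _ _)).
rewrite (big_ord_widen M F (leq_maxr _ _)) big_mkcond [RHS]big_mkcond.
apply: eq_bigr => i _ /=.
by case: ltnP => hp; case: ltnP => hn //; rewrite vanish ?hp ?hn ?orbT.
Qed.

Lemma low_coef_decomp s n : (forall k, (k < n)%N -> s`_k = 0) ->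
  s = s`_n *: 'X^n + drop_poly n.+1 s * 'X^(n.+1).
Proof.
move=> low; rewrite -{1}(poly_take_drop n.+1 s); congr (_ + _).
apply/polyP => i; rewrite coef_take_poly coefZ coefXn ltnS.
by case: ltngtP => [/low -> | |->]; rewrite ?mulr0 ?mulr1.
Qed.

Lemma coefM_low c s n : (forall k, (k < n)%N -> s`_k = 0) -> (c * s)`_n = c`_0 * s`_n.
Proof.
move=> /low_coef_decomp {1}->; rewrite mulrDr mulrA coefD coefMXn ltnSn addr0.
by rewrite -scalerAr coefZ coefMXn ltnn subnn mulrC.
Qed.

Lemma coef_comp_Xmul_low s t n : (forall k, (k < n)%N -> s`_k = 0) ->
  (s \Po ('X * t))`_n = s`_n * t`_0 ^+ n.
Proof.
move=> /low_coef_decomp {1}->.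
rewrite comp_polyD comp_polyM comp_polyZ !comp_Xn_poly !exprMn coefD mulrCA coefXnM.
by rewrite ltnSn addr0 coefZ coefXnM ltnn subnn -!horner_coef0 horner_exp.
Qed.

Definition geomp N : {poly R} := \poly_(i < N) 1.

Lemma geompS N : geomp N.+1 = geomp N + 'X^N.
Proof.
apply/polyP => i; rewrite coefD !coef_poly coefXn ltnS.
by case: ltngtP; rewrite ?mulr0n ?mulr1n ?addr0 ?add0r.
Qed.

Lemma mul_1mX_geomp N : (1 - 'X) * geomp N = 1 - 'X^N.
Proof.
elim: N => [|N IH]; last by rewrite geompS mulrDr IH exprS; ring.
by rewrite /geomp poly_def big_ord0 mulr0 expr0 subrr.
Qed.

Lemma geomp_coef0 N : (0 < N)%N -> (geomp N)`_0 = 1.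
Proof. by move=> N_gt0; rewrite coef_poly N_gt0. Qed.

Lemma coef0_1mX : (1 - 'X : {poly R})`_0 = 1.
Proof. by rewrite coefB coef1 coefX subr0. Qed.

(* [zexp a a' r] is [a ^ r], with [a'] playing the role of [a^-1]. *)
Definition zexp a a' (r : int) : {poly R} :=
  match r with Posz k => a ^+ k | Negz k => a' ^+ k.+1 end.

Lemma zexp_coef0 a a' r : a`_0 = 1 -> a'`_0 = 1 -> (zexp a a' r)`_0 = 1.
Proof.
move=> a1 a'1; case: r => k;
  by rewrite -horner_coef0 horner_exp horner_coef0 ?a1 ?a'1 expr1n.
Qed.

Lemma eqmodX_zexp_comp N a a' q r :
  eqmodX N (a \Po q) a' -> eqmodX N (a' \Po q) a ->
  eqmodX N (zexp a a' r \Po q) (zexp a' a r).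
Proof. by move=> aq a'q; case: r => k; rewrite /zexp rmorphXn; apply: eqmodXX. Qed.

Lemma eqmodX_zexpV N a a' r :
  eqmodX N (a' * a) 1 -> eqmodX N (zexp a' a r * zexp a a' r) 1.
Proof.
move=> a'a; have pow1 k : eqmodX N ((a' * a) ^+ k) 1.
  by rewrite -(expr1n {poly R} k); apply: eqmodXX.
by case: r => k; rewrite /zexp -exprMn // mulrC.
Qed.

Definition x_over_xm1p N : {poly R} := 'X * - geomp N.

Definition defectp N r p : {poly R} :=
  p \Po x_over_xm1p N - zexp (1 - 'X) (geomp N) r * p.

Section Involution.
Variables (N : nat) (r : int).
Local Notation G := (geomp N).
Local Notation g := (x_over_xm1p N).

Lemma eqmodX_geomp_1mX : eqmodX N (G * (1 - 'X)) 1.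
Proof. by exists (-1); rewrite mulrC mul_1mX_geomp; ring. Qed.

Lemma eqmodX_1m_x_over_xm1p : eqmodX N (1 - g) G.
Proof.
exists 1; have XN : 'X^N = 1 - (1 - 'X) * G by rewrite mul_1mX_geomp; ring.
by rewrite XN /x_over_xm1p; ring.
Qed.

Lemma comp_1mX_x_over_xm1p : (1 - 'X) \Po g = 1 - g.
Proof. by rewrite comp_polyB -polyC1 comp_polyC comp_polyX. Qed.

Lemma eqmodX_geomp_comp : eqmodX N (G \Po g) (1 - 'X).
Proof.
have Gg_1mg : eqmodX N ((G \Po g) * (1 - g)) 1.
  rewrite -comp_1mX_x_over_xm1p -comp_polyM mulrC mul_1mX_geomp comp_polyB.
  rewrite -polyC1 comp_polyC comp_Xn_poly /x_over_xm1p exprMn.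
  by exists (- (- G) ^+ N); rewrite polyC1; ring.
have inv_1mX : eqmodX N ((1 - g) * (1 - 'X)) 1.
  exact: eqmodX_trans (eqmodXMr _ eqmodX_1m_x_over_xm1p) eqmodX_geomp_1mX.
apply: eqmodX_trans (eqmodX_sym (eqmodX_mul1 (G \Po g) inv_1mX)) _.
by rewrite mulrA -[X in eqmodX _ _ X]mul1r; apply: eqmodXMr.
Qed.

Lemma eqmodX_x_over_xm1p_comp : eqmodX N (g \Po g) 'X.
Proof.
have -> : g \Po g = g * - (G \Po g).
  by rewrite {1}/x_over_xm1p comp_polyM comp_polyX raddfN.
apply: eqmodX_trans (eqmodXMl _ (eqmodXN eqmodX_geomp_comp)) _.
have -> : g * - (1 - 'X) = 'X * (G * (1 - 'X)) by rewrite /x_over_xm1p; ring.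
exact: eqmodX_mul1 eqmodX_geomp_1mX.
Qed.

Lemma eqmodX_comp_x_over_xm1pK p : eqmodX N ((p \Po g) \Po g) p.
Proof.
rewrite -comp_polyA -[X in eqmodX _ _ X](comp_polyXr p).
exact: eqmodX_compr eqmodX_x_over_xm1p_comp.
Qed.

Lemma eqmodX_defectp_comp p :
  eqmodX N (defectp N r p \Po g) (- (zexp G (1 - 'X) r * defectp N r p)).
Proof.
set C := zexp (1 - 'X) G r; set D := zexp G (1 - 'X) r.
have Cg : eqmodX N (C \Po g) D.
  apply: eqmodX_zexp_comp eqmodX_geomp_comp.
  by rewrite comp_1mX_x_over_xm1p; apply: eqmodX_1m_x_over_xm1p.
have DC : eqmodX N (D * C) 1 by apply: eqmodX_zexpV eqmodX_geomp_1mX.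
have -> : - (D * defectp N r p) = D * C * p - D * (p \Po g).
  by rewrite /defectp -/C; ring.
rewrite /defectp -/C comp_polyB comp_polyM; apply: eqmodXB.
  apply: eqmodX_trans (eqmodX_comp_x_over_xm1pK p) _.
  by rewrite -[X in eqmodX _ X _]mul1r; apply/eqmodXMr/eqmodX_sym.
exact: eqmodXMr.
Qed.

Lemma defectpB p q : defectp N r p - defectp N r q = defectp N r (p - q).
Proof. by rewrite /defectp comp_polyB; ring. Qed.

Lemma coef_defectp_low s n : (n < N)%N -> (forall k, (k < n)%N -> s`_k = 0) ->
  (defectp N r s)`_n = ((-1) ^+ n - 1) * s`_n.
Proof.
move=> ltnN low; have N_gt0 : (0 < N)%N by apply: leq_ltn_trans ltnN.
rewrite coefB coef_comp_Xmul_low // coefM_low // coefN geomp_coef0 //.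
by rewrite zexp_coef0 ?geomp_coef0 ?coef0_1mX //; ring.
Qed.

Lemma coef_defectp_even s n : (n < N)%N -> ~~ odd n ->
  (forall k, (k < n)%N -> (defectp N r s)`_k = 0) -> (defectp N r s)`_n *+ 2 = 0.
Proof.
move=> ltnN even_n low; have N_gt0 : (0 < N)%N by apply: leq_ltn_trans ltnN.
have := eqmodX_coef (eqmodX_defectp_comp s) ltnN.
rewrite coef_comp_Xmul_low // !coefN coefM_low // geomp_coef0 //.
rewrite -signr_odd (negPf even_n) zexp_coef0 ?geomp_coef0 ?coef0_1mX //.
by rewrite expr0 mulr1 mul1r mulr2n => {1}->; rewrite addNr.
Qed.

End Involution.

End PolyModXn.

Arguments geomp {R} N.
Arguments x_over_xm1p {R} N.

Section FpsTruncation.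
Variable K : numFieldType.
Implicit Types (f h phi : nat -> K) (p q t : {poly K}).

Definition agree N f p := forall n, (n < N)%N -> f n = p`_n.

Lemma agree_poly N f : agree N f (\poly_(i < N) f i).
Proof. by move=> n ltnN; rewrite coef_poly ltnN. Qed.

Lemma agree_mul N f h p q : agree N f p -> agree N h q -> agree N (fps_mul f h) (p * q).
Proof.
move=> fp hq n ltnN; rewrite coefM /fps_mul; apply: eq_bigr => -[j lejn] _ /=.
by rewrite fp ?hq //; lia.
Qed.

Lemma agree_exp N f p j : agree N f p -> agree N (fps_exp f j) (p ^+ j).
Proof.
move=> fp; elim: j => [|j IH]; last by rewrite exprS /fps_exp iterS; apply: agree_mul.
by rewrite expr0 /agree => n _; rewrite coef1 /fps_exp /fps_one /=; case: (n == 0%N).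
Qed.

Lemma agree_x_over_xm1 N : agree N (fps_x_over_xm1 K) (x_over_xm1p N).
Proof.
apply: agree_mul => n ltnN; first by rewrite coefX /fps_X; case: (n == 1%N).
by rewrite coefN coef_poly ltnN.
Qed.

Lemma agree_powz N r : agree N (fps_powz K r) (zexp (1 - 'X) (geomp N) r).
Proof.
case: r => k; apply: agree_exp => n ltnN; last by rewrite coef_poly ltnN.
rewrite coefB coef1 coefX /fps_1mX.
by case: n {ltnN} => [|[|n]]; rewrite ?subr0 ?sub0r ?subrr.
Qed.

Lemma agree_comp N f h p t : agree N f p -> agree N h ('X * t) ->
  agree N (fps_comp f h) (p \Po ('X * t)).
Proof.
move=> fp hXt n ltnN; rewrite coef_comp_poly_Xmul /fps_comp.
by apply: eq_bigr => -[j lejn] _ /=; rewrite (agree_exp j hXt) // fp //; lia.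
Qed.

Definition defect r phi n :=
  fps_comp phi (fps_x_over_xm1 K) n - fps_mul (fps_powz K r) phi n.

Lemma defect_agree N r phi p : agree N phi p ->
  forall n, (n < N)%N -> defect r phi n = (defectp N r p)`_n.
Proof.
move=> phip n ltnN; rewrite /defect coefB.
rewrite (agree_comp phip (@agree_x_over_xm1 N)) //.
by rewrite (agree_mul (@agree_powz N r) phip).
Qed.

Section Defect.
Variable r : int.

Lemma inF_defect phi : inF r phi <-> forall n, defect r phi n = 0.
Proof.
split=> sol n; first by rewrite /defect sol subrr.
by apply/eqP; rewrite -subr_eq0; apply/eqP; apply: sol.
Qed.

Lemma defect_step phi phi' n : (forall k, (k < n)%N -> phi k = phi' k) ->
  defect r phi n - defect r phi' n = ((-1) ^+ n - 1) * (phi n - phi' n).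
Proof.
move=> low; rewrite !(defect_agree r (@agree_poly n.+1 _) (ltnSn n)).
rewrite -coefB defectpB.
rewrite coef_defectp_low // => [|k ltkn]; rewrite coefB !coef_poly ltnS ?leqnn //.
by rewrite (ltnW ltkn) low ?subrr.
Qed.

Lemma eq_defect phi phi' n : (forall k, (k <= n)%N -> phi k = phi' k) ->
  defect r phi n = defect r phi' n.
Proof.
move=> le_n; apply/eqP; rewrite -subr_eq0 defect_step ?le_n ?subrr ?mulr0 //.
by move=> k /ltnW; apply: le_n.
Qed.

Lemma defect_even phi n : ~~ odd n -> (forall k, (k < n)%N -> defect r phi k = 0) ->
  defect r phi n = 0.
Proof.
move=> even_n low; pose p := \poly_(i < n.+1) phi i.
have phip k : (k < n.+1)%N -> defect r phi k = (defectp n.+1 r p)`_k.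
  by apply: defect_agree; apply: agree_poly.
have low_p k : (k < n)%N -> (defectp n.+1 r p)`_k = 0.
  by move=> ltkn; rewrite -phip ?low // ltnW.
have /eqP := coef_defectp_even (ltnSn n) even_n low_p.
by rewrite mulrn_eq0 /= -phip // => /eqP.
Qed.

Lemma inF_eq_even phi phi' : inF r phi -> inF r phi' ->
  (forall k, ~~ odd k -> phi k = phi' k) -> phi =1 phi'.
Proof.
move=> /inF_defect sol /inF_defect sol' even_eq; elim/ltn_ind => n IH.
case odd_n: (odd n); last by rewrite even_eq ?odd_n.
have := defect_step IH; rewrite sol sol' subrr -signr_odd odd_n => /esym/eqP.
rewrite expr1 -opprD -mulr2n mulf_eq0 oppr_eq0 mulrn_eq0 oner_eq0 /=.
by rewrite subr_eq0 => /eqP.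
Qed.

Section Construction.
Variable ev : nat -> K.

(* By defect_step, raising [phi n] by [c] at an odd [n] lowers [defect r phi n] by [2 c]. *)
Fixpoint solve_odd m : nat -> K :=
  match m with
  | 0 => interleave ev (fun=> 0)
  | m'.+1 => let phi := solve_odd m' in
      if odd m'.+1 then
        fun k => if k == m'.+1 then phi k + defect r phi k / 2 else phi k
      else phi
  end.

Lemma solve_oddS_neq m k : k != m.+1 -> solve_odd m.+1 k = solve_odd m k.
Proof. by move=> /negPf neq_km /=; case: ifP => // _; rewrite neq_km. Qed.

Lemma solve_odd_stable m k : (k <= m)%N -> solve_odd m k = solve_odd k k.
Proof.
elim: m => [|m IH]; first by rewrite leqn0 => /eqP ->.
rewrite leq_eqVlt => /orP[/eqP -> // | ltkm].
by rewrite solve_oddS_neq ?IH // neq_ltn ltkm.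
Qed.

Lemma solve_odd_even k m : ~~ odd k -> solve_odd m k = ev k./2.
Proof.
move=> /negPf even_k; elim: m => [|m IH]; first by rewrite /= /interleave even_k.
cbn [solve_odd]; case: ifP => // odd_m.
by case: eqP => // ek; rewrite ek odd_m in even_k.
Qed.

Lemma defect_solve_odd n : defect r (solve_odd n) n = 0.
Proof.
elim/ltn_ind: n => n IH; case odd_n: (odd n); last first.
  apply: defect_even => [|k ltkn]; first by rewrite odd_n.
  rewrite -[RHS](IH k ltkn); apply: eq_defect => j lejk.
  have lejn := leq_trans lejk (ltnW ltkn).
  by rewrite solve_odd_stable ?(solve_odd_stable (m := k)).
case: n odd_n IH => [//|m] odd_m _; set d := defect r (solve_odd m) m.+1.
have low k : (k < m.+1)%N -> solve_odd m.+1 k = solve_odd m k.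
  by move=> ltkm; rewrite solve_oddS_neq // neq_ltn ltkm.
have top : solve_odd m.+1 m.+1 = solve_odd m m.+1 + d / 2.
  by cbn [solve_odd]; rewrite odd_m eqxx.
have /eqP := defect_step low; rewrite subr_eq => /eqP ->.
by rewrite -signr_odd odd_m top -/d {2}(splitr d); ring.
Qed.

Lemma interleave_inF_exists : exists od, inF r (interleave ev od).
Proof.
exists (fun i => solve_odd i.*2.+1 i.*2.+1); apply/inF_defect => n.
rewrite -(defect_solve_odd n); apply: eq_defect => k lekn.
rewrite solve_odd_stable // /interleave; case: ifP => [odd_k | /negbT even_k].
  by rewrite -[in RHS](odd_double_half k) odd_k.
by rewrite solve_odd_even.
Qed.

End Construction.

End Defect.

Lemma interleave_odd (ev od : nat -> K) i : interleave ev od i.*2.+1 = od i.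
Proof. by rewrite /interleave /= odd_double uphalf_double. Qed.

End FpsTruncation.

Theorem corollary5p1 (K : numFieldType) (r : int) (ev : nat -> K) :
  exists! od : nat -> K, inF r (interleave ev od).
Proof.
have [od od_sol] := interleave_inF_exists r ev.
exists od; split=> // od' od'_sol; apply: functional_extensionality => i.
rewrite -(interleave_odd ev od) -(interleave_odd ev od').
apply: (inF_eq_even od_sol od'_sol) => k /negPf even_k.
by rewrite /interleave even_k.
Qed.
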